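(* Let $(\mathbb{X},d,\mu)$ be a metric measure space, $\Omega\subset\mathbb{X}$ a domain and $\varrho$ an admissible radius function in $\Omega$. Then for every $u\in L^\infty(\Omega)$, all $x,y\in\Omega$ and every $n\in\mathbb{N}$, $$|\mathcal{M}^nu(x)-\mathcal{M}^nu(y)|\leq2\|u\|_\infty\frac{\mu(B_x\triangle B_y)}{\max\{\mu(B_x),\mu(B_y)\}}.$$
   Context: A metric measure space $(\mathbb{X},d,\mu)$ is a metric space with a positive Borel regular measure $\mu$ with $0<\mu(B)<\infty$ for every ball $B$. An admissible radius function in $\Omega$ is $\varrho\in C(\overline\Omega)$, $\varrho\ge0$, with $0<\varrho(x)\leq\mathrm{dist}(x,\partial\Omega)$ for $x\in\Omega$ and $\varrho=0$ exactly on $\partial\Omega$. For $x\in\Omega$, $B_x=\overline{B}(x,\varrho(x))$ and $\mathcal{M}u(x)=\frac{1}{\mu(B_x)}\int_{B_x}u\,d\mu$; $\mathcal{M}^n$ is the $n$-th iterate. $A\triangle B=(A\setminus B)\cup(B\setminus A)$. *)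

From HB Require Import structures.
From mathcomp Require Import all_boot all_order all_algebra.
From mathcomp Require Import all_classical all_reals all_analysis.
Set Implicit Arguments. Unset Strict Implicit. Unset Printing Implicit Defensive.
Import Order.TTheory GRing.Theory Num.Theory.
Local Open Scope classical_set_scope.
Local Open Scope ring_scope.

Section MetricDefs.
Context {R : realType} {T : Type}.
Variable dist : T -> T -> R.

Definition is_metric : Prop :=
  (forall x y, 0 <= dist x y) /\ (forall x y, dist x y = 0 <-> x = y) /\
  (forall x y, dist x y = dist y x) /\
  (forall x y z, dist x z <= dist x y + dist y z).

Definition oball (x : T) (r : R) : set T := [set y | dist x y < r].
Definition cball (x : T) (r : R) : set T := [set y | dist x y <= r].

Definition mopen (A : set T) : Prop :=
  forall x, A x -> exists2 r, 0 < r & oball x r `<=` A.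
Definition minterior (A : set T) : set T :=
  [set x | exists2 r, 0 < r & oball x r `<=` A].
Definition mclosure (A : set T) : set T :=
  [set x | forall r, 0 < r -> oball x r `&` A !=set0].
Definition mboundary (A : set T) : set T := mclosure A `\` minterior A.

Definition mconnected (A : set T) : Prop :=
  forall U V, mopen U -> mopen V -> A `<=` U `|` V -> U `&` V `&` A = set0 ->
    A `&` U = set0 \/ A `&` V = set0.

Definition mdomain (O : set T) : Prop := O !=set0 /\ mopen O /\ mconnected O.

(* distance from a point to a set (+oo for the empty set) *)
Definition dist_set (x : T) (S : set T) : \bar R :=
  ereal_inf [set (dist x y)%:E | y in S].

Definition admissible (O : set T) (rho : T -> R) : Prop :=
  (forall x, mclosure O x -> 0 <= rho x) /\
  (forall x, mclosure O x -> forall e, 0 < e -> exists2 dl, 0 < dl &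
     forall y, mclosure O y -> dist x y < dl -> `|rho y - rho x| < e) /\
  (forall x, O x -> 0 < rho x /\ ((rho x)%:E <= dist_set x (mboundary O))%E) /\
  (forall x, mclosure O x -> (rho x = 0 <-> mboundary O x)).

Definition ball_of (rho : T -> R) (x : T) : set T := cball x (rho x).

End MetricDefs.

Definition symdiff {T : Type} (A B : set T) : set T := (A `\` B) `|` (B `\` A).

Definition metric_measure_space {R : realType} {d} {T : measurableType d}
  (dist : T -> T -> R) (mu : set T -> \bar R) : Prop :=
  is_metric dist /\
  (forall A, mopen dist A -> measurable A) /\
  (forall A, measurable A -> exists B,
      <<s mopen dist >> B /\ A `<=` B /\ mu A = mu B) /\
  (forall x r, 0 < r -> (0 < mu (oball dist x r) < +oo)%E).

Definition linf_norm {R : realType} {d} {T : measurableType d}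
  (mu : set T -> \bar R) (D : set T) (u : T -> R) : \bar R :=
  ereal_inf [set M : \bar R | exists N, measurable N /\ mu N = 0%E /\
     forall x, D x -> ~ N x -> (`|u x|%:E <= M)%E].

(* averaging operator M v (x) = (1/mu(B_x)) \int_{B_x} v dmu, where v is a
   function on O (extended by zero outside O). *)
Definition avg_op {R : realType} {d} {T : measurableType d}
  (mu : set T -> \bar R) (dist : T -> T -> R) (O : set T) (rho : T -> R)
  (v : T -> R) : T -> R :=
  fun x => fine (\int[mu]_(y in ball_of dist rho x `&` O) (v y)%:E)
           / fine (mu (ball_of dist rho x)).

(* If |v| <= L almost everywhere on O, then |M v| <= L everywhere on O, so
   every iterate M^n u is bounded by the essential supremum of u (which is
   itself an almost-everywhere bound, null sets being closed under countable
   unions).  For such a v the integrals over B_x `&` O and B_y `&` O differ by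
   at most L mu(B_x symdiff B_y), and so do mu(B_x) and mu(B_y) (take v = 1);
   an elementary inequality for quotients turns these three bounds into the
   estimate for M v x - M v y.

   The iterates M^n u are not known to be measurable, so no measurability is
   ever used: for nonnegative f the integral is the supremum of the integrals
   of the simple functions below f, and that is enough to make it monotone in
   f and in the domain and to bound the increment over an added piece. *)

From HB Require Import structures.
From mathcomp Require Import all_boot all_order all_algebra.
From mathcomp Require Import all_classical all_reals all_analysis.
From mathcomp Require Import measurable_realfun ring lra.
Set Implicit Arguments.
Unset Strict Implicit.
Unset Printing Implicit Defensive.
Import Order.TTheory GRing.Theory Num.Theory.
Local Open Scope classical_set_scope.
Local Open Scope ring_scope.

Lemma abs_sub_ratio_le (R : realFieldType) (L mx my Ix Iy dl : R) :
  0 < mx -> 0 < my -> `|Ix| <= L * mx -> `|Iy| <= L * my ->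
  `|Ix - Iy| <= L * dl -> `|mx - my| <= dl ->
  `|Ix / mx - Iy / my| <= 2 * L * dl / Num.max mx my.
Proof.
wlog le_my_mx : mx my Ix Iy / my <= mx.
  move=> wlog_le mx0 my0 Ixb Iyb Ib mb.
  have /orP[le|le] := le_total my mx; first exact: wlog_le.
  by rewrite distrC maxC wlog_le 1?distrC.
move=> mx0 my0 Ixb Iyb Ib mb; rewrite max_l//.
have -> : Ix / mx - Iy / my = ((Ix - Iy) * my + Iy * (my - mx)) / (mx * my).
  by field; rewrite !gt_eqF.
rewrite normrM normfV (gtr0_norm (mulr_gt0 mx0 my0)) ler_pdivrMr ?mulr_gt0//.
have -> : 2 * L * dl / mx * (mx * my) = L * dl * my + L * my * dl.
  by field; rewrite gt_eqF.
apply: le_trans (ler_normD _ _) _; rewrite !normrM (gtr0_norm my0).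
apply: lerD; first by rewrite ler_wpM2r// ltW.
by rewrite ler_pM// distrC.
Qed.

Section bounded_integrals.
Context d (T : measurableType d) (R : realType).
Variable mu : {measure set T -> \bar R}.
Local Open Scope ereal_scope.
Import HBNNSimple.

Lemma ge0_le_integral_nonmeasurable (D : set T) (f g : T -> \bar R) :
  (forall x, D x -> 0 <= f x) -> (forall x, D x -> f x <= g x) ->
  \int[mu]_(x in D) f x <= \int[mu]_(x in D) g x.
Proof.
move=> f0 fg.
have g0 x : D x -> 0 <= g x by move=> Dx; exact: le_trans (f0 _ Dx) (fg _ Dx).
rewrite !ge0_integralE//; apply: ereal_sup_le => _ [h hf <-].
exists h => //= x; apply: le_trans (hf x) _.
by rewrite /patch; case: ifP => // /set_mem; exact: fg.
Qed.

Lemma ge0_subset_integral_nonmeasurable (A B : set T) (f : T -> \bar R) :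
  (forall x, B x -> 0 <= f x) -> A `<=` B ->
  \int[mu]_(x in A) f x <= \int[mu]_(x in B) f x.
Proof.
move=> f0 AB; have fA0 x : A x -> 0 <= f x by move/AB; exact: f0.
rewrite (ge0_integralE _ fA0) (ge0_integralE _ f0).
apply: ereal_sup_le => _ [h hf <-]; exists h => //= x; apply: le_trans (hf x) _.
rewrite /patch; case: ifPn => [/set_mem/AB/mem_set -> //|_].
by case: ifPn => // /set_mem; exact: f0.
Qed.

Lemma ge0_integral_le_setD (A B : set T) (f : T -> \bar R) (L : R) :
  measurable A -> measurable B -> (forall x, 0 <= f x) -> (0 <= L)%R ->
  {ae mu, forall x, (A `\` B) x -> f x <= L%:E} ->
  \int[mu]_(x in A) f x <= \int[mu]_(x in B) f x + L%:E * mu (A `\` B).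
Proof.
move=> mA mB f0 L0 fL; rewrite (ge0_integralE _ (fun x _ => f0 x)).
apply: ge_ereal_sup => _ [h hf <-] /=.
have mh : measurable_fun setT (EFin \o h).
  by apply/measurable_EFinP; exact: measurable_funPT.
have h0 x : 0 <= (h x)%:E by rewrite lee_fin.
have hA x : A x -> (h x)%:E <= f x.
  by move=> Ax; move: (hf x); rewrite /patch ifT//; exact: mem_set.
rewrite -integralT_nnsfun.
have -> : \int[mu]_x (h x)%:E = \int[mu]_(x in A) (h x)%:E.
  rewrite [RHS]integral_mkcond; apply: eq_integral => x _.
  rewrite /patch; case: ifPn => // nAx; apply/eqP; rewrite eq_le h0 andbT.
  by move: (hf x); rewrite /patch (negbTE nAx).
rewrite -[in X in X <= _](setUIDK A B) ge0_integral_setU//; first last.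
- by rewrite disj_set2E; apply/eqP/seteqP; split=> x // [[_ Bx] [_ /(_ Bx)]].
- by rewrite setUIDK; exact: measurable_funS mh.
- exact: measurableD.
- exact: measurableI.
apply: leeD.
  have f0' x : B x -> 0 <= f x by move=> _; exact: f0.
  apply: le_trans _ (ge0_subset_integral_nonmeasurable f0' (@subIsetr _ A B)).
  by apply: ge0_le_integral_nonmeasurable => // x [Ax _]; exact: hA.
rewrite -integral_cst; last exact: measurableD.
apply: ae_ge0_le_integral => //.
- exact: measurableD.
- exact: measurable_funS mh.
- apply: filterS fL => x fxL ABx; exact: le_trans (hA _ ABx.1) (fxL ABx).
Qed.

Lemma ge0_integral_le_bound (A : set T) (f : T -> \bar R) (L : R) :
  measurable A -> (forall x, 0 <= f x) -> (0 <= L)%R ->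
  {ae mu, forall x, A x -> f x <= L%:E} ->
  \int[mu]_(x in A) f x <= L%:E * mu A.
Proof.
move=> mA f0 L0 fL.
have fL' : {ae mu, forall x, (A `\` set0) x -> f x <= L%:E}.
  by move: fL; apply: filterS => x fxL [Ax _]; exact: fxL.
have := ge0_integral_le_setD mA measurable0 f0 L0 fL'.
by rewrite integral_set0 add0e setD0.
Qed.

Lemma ge0_integral_fin_num (A : set T) (f : T -> \bar R) (L : R) :
  measurable A -> mu A < +oo -> (forall x, 0 <= f x) -> (0 <= L)%R ->
  {ae mu, forall x, A x -> f x <= L%:E} -> \int[mu]_(x in A) f x \is a fin_num.
Proof.
move=> mA muA f0 L0 fL; rewrite ge0_fin_numE; last exact: integral_ge0.
apply: le_lt_trans (ge0_integral_le_bound mA f0 L0 fL) _.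
by rewrite -(@fineK _ (mu A)) ?ge0_fin_numE// -EFinM ltry.
Qed.

Lemma measure_fin_numS (A B : set T) : measurable A -> measurable B ->
  A `<=` B -> mu B < +oo -> mu A \is a fin_num.
Proof.
move=> mA mB AB muB; rewrite ge0_fin_numE//.
by apply: le_lt_trans muB; apply: le_measure; rewrite ?inE.
Qed.

Lemma ae_subset (A B : set T) (P : T -> Prop) : A `<=` B ->
  {ae mu, forall x, B x -> P x} -> {ae mu, forall x, A x -> P x}.
Proof. by move=> AB; apply: filterS => x BP /AB; exact: BP. Qed.

Lemma fine_ge0_integral_le_setD (A B : set T) (f : T -> \bar R) (L : R) :
  measurable A -> measurable B -> mu A < +oo -> mu B < +oo ->
  (forall x, 0 <= f x) -> (0 <= L)%R ->
  {ae mu, forall x, (A `|` B) x -> f x <= L%:E} ->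
  (fine (\int[mu]_(x in A) f x)
    <= fine (\int[mu]_(x in B) f x) + L * fine (mu (A `\` B)))%R.
Proof.
move=> mA mB muA muB f0 L0 fL.
have finA := ge0_integral_fin_num mA muA f0 L0 (ae_subset (@subsetUl _ A B) fL).
have finB := ge0_integral_fin_num mB muB f0 L0 (ae_subset (@subsetUr _ A B) fL).
have finD := measure_fin_numS (measurableD mA mB) mA (@subDsetl _ A B) muA.
rewrite -lee_fin EFinD EFinM !fineK//.
by apply: ge0_integral_le_setD => //; apply: ae_subset fL => x [Ax _]; left.
Qed.

Lemma funeposneg_EFin_le (v : T -> R) (L : R) x : (`|v x| <= L)%R ->
  (fun y => (v y)%:E)^\+ x <= L%:E /\ (fun y => (v y)%:E)^\- x <= L%:E.
Proof.
move=> vxL; have L0 : (0 <= L)%R by apply: le_trans vxL.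
rewrite funeposE funenegE !ge_max !lee_fin L0 !andbT; split.
  exact: le_trans (ler_norm _) vxL.
by rewrite -normrN in vxL; exact: le_trans (ler_norm _) vxL.
Qed.

Lemma fine_integralE_bounded (A : set T) (v : T -> R) (L : R) :
  measurable A -> mu A < +oo -> (0 <= L)%R ->
  {ae mu, forall x, A x -> (`|v x| <= L)%R} ->
  fine (\int[mu]_(x in A) (v x)%:E) =
  (fine (\int[mu]_(x in A) (fun y => (v y)%:E)^\+ x)
   - fine (\int[mu]_(x in A) (fun y => (v y)%:E)^\- x))%R.
Proof.
move=> mA muA L0 vL; rewrite integralE fineB//.
  apply: ge0_integral_fin_num L0 _ => //; move: vL; apply: filterS.
  by move=> x vxL /vxL /funeposneg_EFin_le[].
apply: ge0_integral_fin_num L0 _ => //; move: vL; apply: filterS.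
by move=> x vxL /vxL /funeposneg_EFin_le[].
Qed.

Lemma measure_symdiff (A B : set T) : measurable A -> measurable B ->
  mu (symdiff A B) = mu (A `\` B) + mu (B `\` A).
Proof.
move=> mA mB; rewrite measureU//; try exact: measurableD.
by rewrite -subset0 => x [[_ nBx] [Bx _]].
Qed.

Lemma abs_fine_integral_sub_le (A B : set T) (v : T -> R) (L : R) :
  measurable A -> measurable B -> mu A < +oo -> mu B < +oo -> (0 <= L)%R ->
  {ae mu, forall x, (A `|` B) x -> (`|v x| <= L)%R} ->
  (`|fine (\int[mu]_(x in A) (v x)%:E) - fine (\int[mu]_(x in B) (v x)%:E)|
    <= L * fine (mu (symdiff A B)))%R.
Proof.
move=> mA mB muA muB L0 vL; set vE := fun x => (v x)%:E.
have vpL : {ae mu, forall x, (A `|` B) x -> vE^\+ x <= L%:E}.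
  by move: vL; apply: filterS => x vxL /vxL /funeposneg_EFin_le[].
have vnL : {ae mu, forall x, (A `|` B) x -> vE^\- x <= L%:E}.
  by move: vL; apply: filterS => x vxL /vxL /funeposneg_EFin_le[].
rewrite (fine_integralE_bounded mA muA L0 (ae_subset (@subsetUl _ A B) vL)).
rewrite (fine_integralE_bounded mB muB L0 (ae_subset (@subsetUr _ A B) vL)).
have finAB := measure_fin_numS (measurableD mA mB) mA (@subDsetl _ A B) muA.
have finBA := measure_fin_numS (measurableD mB mA) mB (@subDsetl _ B A) muB.
have BA : B `|` A `<=` A `|` B by rewrite setUC.
have pAB := fine_ge0_integral_le_setD mA mB muA muB (funepos_ge0 vE) L0 vpL.
have nAB := fine_ge0_integral_le_setD mA mB muA muB (funeneg_ge0 vE) L0 vnL.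
have pBA := fine_ge0_integral_le_setD mB mA muB muA (funepos_ge0 vE) L0
  (ae_subset BA vpL).
have nBA := fine_ge0_integral_le_setD mB mA muB muA (funeneg_ge0 vE) L0
  (ae_subset BA vnL).
rewrite measure_symdiff// (fineD finAB finBA) ler_norml; apply/andP; split; lra.
Qed.

Lemma abs_fine_measure_sub_le (A B : set T) :
  measurable A -> measurable B -> mu A < +oo -> mu B < +oo ->
  (`|fine (mu A) - fine (mu B)| <= fine (mu (symdiff A B)))%R.
Proof.
move=> mA mB muA muB.
have := abs_fine_integral_sub_le mA mB muA muB ler01 (v := cst 1%R).
rewrite !(integral_cst _ _ 1)// !mul1e mul1r; apply.
by apply: aeW => x _; rewrite normr1.
Qed.

Lemma abs_fine_integral_le (A : set T) (v : T -> R) (L : R) :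
  measurable A -> mu A < +oo -> (0 <= L)%R ->
  {ae mu, forall x, A x -> (`|v x| <= L)%R} ->
  (`|fine (\int[mu]_(x in A) (v x)%:E)| <= L * fine (mu A))%R.
Proof.
move=> mA muA L0 vL.
have := abs_fine_integral_sub_le mA measurable0 muA _ L0 (v := v).
by rewrite integral_set0 subr0 /symdiff setD0 set0D !setU0 measure0; apply.
Qed.

End bounded_integrals.

Section metric_balls.
Context d (T : measurableType d) (R : realType).
Variable mu : {measure set T -> \bar R}.
Variable dist : T -> T -> R.
Hypothesis mms : metric_measure_space dist mu.

Lemma oball_measurable x r : measurable (oball dist x r).
Proof.
have [[_ [_ [_ dtri]]] [mopen_measurable _]] := mms.
apply: mopen_measurable => y; rewrite /oball/= => xy.
exists (r - dist x y); first by rewrite subr_gt0.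
by move=> z; rewrite /oball/= => yz; have := dtri x y z; lra.
Qed.

Lemma cball_measurable x r : measurable (cball dist x r).
Proof.
have [[_ [_ [dsym dtri]]] [mopen_measurable _]] := mms.
rewrite -[cball _ _ _]setCK; apply/measurableC/mopen_measurable => y.
rewrite /cball/= => /negP; rewrite -ltNge => rxy.
exists (dist x y - r); first by rewrite subr_gt0.
move=> z; rewrite /oball/cball/= => yz xz.
by have := dtri x z y; rewrite (dsym z y); lra.
Qed.

Lemma cball_measure_gt0_lty x r : 0 < r -> (0 < mu (cball dist x r) < +oo)%E.
Proof.
have [_ [_ [_ oball_gt0_lty]]] := mms; move=> r0.
have /andP[gt0 _] := oball_gt0_lty x r r0.
have /andP[_ lty] := oball_gt0_lty x (r + 1) ltac:(lra).
apply/andP; split.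
  apply: lt_le_trans gt0 _; apply: le_measure; rewrite ?inE.
  - exact: oball_measurable.
  - exact: cball_measurable.
  - by move=> z; rewrite /oball/cball/= => /ltW.
apply: le_lt_trans lty; apply: le_measure; rewrite ?inE.
- exact: cball_measurable.
- exact: oball_measurable.
- by move=> z; rewrite /oball/cball/=; lra.
Qed.

End metric_balls.

Section averaging.
Context d (T : measurableType d) (R : realType).
Variable mu : {measure set T -> \bar R}.
Variable dist : T -> T -> R.
Hypothesis mms : metric_measure_space dist mu.
Variables (O : set T) (rho : T -> R).
Hypothesis mO : measurable O.
Hypothesis rho_gt0 : forall x, O x -> 0 < rho x.

Local Notation B := (ball_of dist rho).
Local Notation M := (avg_op mu dist O rho).

Let mB x : measurable (B x). Proof. exact: (cball_measurable mms). Qed.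

Let muB_gt0_lty x : O x -> (0 < mu (B x) < +oo)%E.
Proof. by move=> Ox; apply: (cball_measure_gt0_lty mms); exact: rho_gt0. Qed.

Let muB_lty x : O x -> (mu (B x) < +oo)%E.
Proof. by case/muB_gt0_lty/andP. Qed.

Let muBI_lty x : O x -> (mu (B x `&` O) < +oo)%E.
Proof.
move=> Ox; apply: le_lt_trans (muB_lty Ox).
by apply: le_measure; rewrite ?inE//; exact: measurableI.
Qed.

Lemma abs_fine_integral_ball_le (v : T -> R) (L : R) x : O x -> 0 <= L ->
  {ae mu, forall y, O y -> `|v y| <= L} ->
  `|fine (\int[mu]_(y in B x `&` O) (v y)%:E)| <= L * fine (mu (B x)).
Proof.
move=> Ox L0 vL; have mBI := measurableI _ _ (mB x) mO.
apply: le_trans (abs_fine_integral_le mBI (muBI_lty Ox) L0 _) _.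
  by apply: ae_subset vL => y [].
rewrite ler_wpM2l// fine_le ?ge0_fin_numE ?muBI_lty ?muB_lty//.
by apply: le_measure; rewrite ?inE.
Qed.

Lemma avg_op_bound (v : T -> R) (L : R) x : 0 <= L ->
  {ae mu, forall y, O y -> `|v y| <= L} -> O x -> `|M v x| <= L.
Proof.
move=> L0 vL Ox; have mux_gt0 := fine_gt0 (muB_gt0_lty Ox).
rewrite normrM normfV (gtr0_norm mux_gt0) ler_pdivrMr//.
exact: abs_fine_integral_ball_le.
Qed.

Lemma iter_avg_op_bound (v : T -> R) (L : R) n : 0 <= L ->
  {ae mu, forall y, O y -> `|v y| <= L} ->
  {ae mu, forall y, O y -> `|iter n M v y| <= L}.
Proof.
move=> L0 vL; elim: n => [//|n IHn].
by apply: aeW => y Oy; exact: avg_op_bound.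
Qed.

Lemma avg_op_sub_le (v : T -> R) (L : R) x y : 0 <= L ->
  {ae mu, forall z, O z -> `|v z| <= L} -> O x -> O y ->
  `|M v x - M v y| <= 2 * L * fine (mu (symdiff (B x) (B y)))
                        / Num.max (fine (mu (B x))) (fine (mu (B y))).
Proof.
move=> L0 vL Ox Oy.
have mBIx := measurableI _ _ (mB x) mO; have mBIy := measurableI _ _ (mB y) mO.
have mBxy : measurable (symdiff (B x) (B y)).
  by apply: measurableU; exact: measurableD.
have mBIxy : measurable (symdiff (B x `&` O) (B y `&` O)).
  by apply: measurableU; exact: measurableD.
have finBxy : mu (symdiff (B x) (B y)) \is a fin_num.
  rewrite measure_symdiff// fin_numD; apply/andP; split.
    exact: measure_fin_numS (measurableD _ _) (mB x) (@subDsetl _ _ _)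
      (muB_lty Ox).
  exact: measure_fin_numS (measurableD _ _) (mB y) (@subDsetl _ _ _)
    (muB_lty Oy).
have symdiffI : symdiff (B x `&` O) (B y `&` O) `<=` symdiff (B x) (B y).
  move=> z [[[Bxz Oz] nBIyz]|[[Byz Oz] nBIxz]]; [left|right].
    by split=> // Byz; exact: nBIyz.
  by split=> // Bxz; exact: nBIxz.
have finBIxy : mu (symdiff (B x `&` O) (B y `&` O)) \is a fin_num.
  by apply: measure_fin_numS symdiffI _; rewrite // -ge0_fin_numE.
apply: abs_sub_ratio_le.
- exact: fine_gt0 (muB_gt0_lty Ox).
- exact: fine_gt0 (muB_gt0_lty Oy).
- exact: abs_fine_integral_ball_le.
- exact: abs_fine_integral_ball_le.
- have vL' : {ae mu, forall z, (B x `&` O `|` B y `&` O) z -> `|v z| <= L}.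
    by apply: ae_subset vL => z [[]|[]].
  apply: le_trans (abs_fine_integral_sub_le mBIx mBIy _ _ L0 vL') _.
  - exact: muBI_lty.
  - exact: muBI_lty.
  by rewrite ler_wpM2l// fine_le//; apply: le_measure; rewrite ?inE.
- exact: abs_fine_measure_sub_le (mB x) (mB y) (muB_lty Ox) (muB_lty Oy).
Qed.

Lemma iter_avg_op_sub_le (u : T -> R) (L : R) n x y : 0 <= L ->
  {ae mu, forall z, O z -> `|u z| <= L} -> O x -> O y ->
  `|iter n.+1 M u x - iter n.+1 M u y|
    <= 2 * L * fine (mu (symdiff (B x) (B y)))
       / Num.max (fine (mu (B x))) (fine (mu (B y))).
Proof.
by move=> L0 uL Ox Oy; apply: avg_op_sub_le => //; exact: iter_avg_op_bound.
Qed.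

End averaging.

Section essential_bound.
Context d (T : measurableType d) (R : realType).
Variable mu : {measure set T -> \bar R}.

Lemma linf_norm_ae_bound (D : set T) (u : T -> R) :
  (linf_norm mu D u < +oo)%E ->
  {ae mu, forall x, D x -> `|u x| <= fine (linf_norm mu D u)}.
Proof.
set l := linf_norm mu D u => l_lty.
have ae_n n : {ae mu, forall x, D x -> `|u x| <= fine l + n.+1%:R^-1}.
  have : (l < (fine l + n.+1%:R^-1)%:E)%E.
    move: l_lty; case: l => [r _| //|_] /=; last exact: ltNyr.
    by rewrite lte_fin ltrDl invr_gt0.
  case/ereal_inf_lt => M [N [mN [N0 uN]]] ltMl; exists N; split => // x /= nux.
  apply: contra_notP nux => Nx Dx; rewrite -lee_fin.
  exact: le_trans (uN x Dx Nx) (ltW ltMl).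
apply: filterS (ae_foralln ae_n) => x uxn Dx; apply/ler_addgt0Pr => e e0.
have [N _ invN_lt] := near_infty_natSinv_lt (PosNum e0).
apply: le_trans (uxn N Dx) _.
by rewrite lerD2l ltW//; apply: invN_lt => /=.
Qed.

Lemma ae_bound_ge0 (D S : set T) (v : T -> R) (L : R) :
  measurable S -> S `<=` D -> (0 < mu S)%E ->
  {ae mu, forall x, D x -> `|v x| <= L} -> 0 <= L.
Proof.
move=> mS SD muS_gt0 [N [mN N0 vN]].
have [z [Sz nNz]] : exists z, S z /\ ~ N z.
  apply: contrapT => noz; suff : (mu S <= mu N)%E by rewrite N0 leNgt muS_gt0.
  apply: le_measure; rewrite ?inE// => z Sz; apply: contrapT => nNz.
  by apply: noz; exists z.
have : D z -> `|v z| <= L by apply: contrapT => /vN.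
by move/(_ (SD z Sz)); exact: le_trans.
Qed.

End essential_bound.

Theorem corollary3p2 (R : realType) (d : measure_display) (T : measurableType d)
  (dist : T -> T -> R) (mu : {measure set T -> \bar R}) (O : set T)
  (rho : T -> R) (u : T -> R) :
  metric_measure_space dist mu -> mdomain dist O -> admissible dist O rho ->
  measurable_fun O u -> (linf_norm mu O u < +oo)%E ->
  forall (x y : T), O x -> O y -> forall n : nat,
  `| iter n.+1 (avg_op mu dist O rho) u x - iter n.+1 (avg_op mu dist O rho) u y |
  <= 2 * fine (linf_norm mu O u)
       * fine (mu (symdiff (ball_of dist rho x) (ball_of dist rho y)))
       / Num.max (fine (mu (ball_of dist rho x))) (fine (mu (ball_of dist rho y))).
Proof.
move=> mms [_ [openO _]] adm _ u_lty x y Ox Oy n.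
have mO : measurable O by apply: mms.2.1.
have rho_gt0 z : O z -> 0 < rho z by move=> Oz; have [] := adm.2.2.1 z Oz.
have uL := linf_norm_ae_bound u_lty.
have [r r_gt0 rO] := openO x Ox.
have /andP[oball_gt0 _] := mms.2.2.2 x r r_gt0.
have L0 := ae_bound_ge0 (oball_measurable mms x r) rO oball_gt0 uL.
exact: iter_avg_op_sub_le.
Qed.
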